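(* Let $L\ge1$ and $\alpha\in(\alpha_{L+1},\alpha_L)$. There exist positive constants $c_1,\dots,c_L$ (depending only on $\alpha$ and $L$) such that for all real numbers $d_1,\dots,d_L$ the system $AS(d_1,\dots,d_L)$ has a unique solution $(l_0,\dots,l_{L+2})$, and this solution satisfies $$d_{L+1}=-d_0(L)-\sum_{k=1}^Lc_kd_k,\qquad d_0=d_0(L)-\sum_{k=1}^Lc_{L+1-k}d_k,$$ where $d_0:=-l_1+\alpha l_2$ and $d_{L+1}:=-\alpha l_L+l_{L+1}$.
   Context: Define $\alpha_1:=+\infty$ and, for $L\ge2$, $\alpha_L:=\dfrac{1}{1+2\cos(\frac{2\pi}{L+2})}$. For real $d_1,\dots,d_L$, the system $AS(d_1,\dots,d_L)$ on the unknown $(l_0,\dots,l_{L+2})\in\mathbb{R}^{L+3}$ is: $l_0=l_{L+2}=0$; $d_j=-\alpha l_{j-1}+l_j-l_{j+1}+\alpha l_{j+2}$ for all $j\in\{1,\dots,L\}$; $\sum_{j=1}^{L+1}l_j=1$. The constant $d_0(L)$ is the value of $-l_1+\alpha l_2$ at the (unique) solution of $AS(0,\dots,0)$; explicitly, with $\omega\in(0,\pi)$ defined by $\cos\omega=\frac{1-\alpha}{2\alpha}$, $d_0(L)=-\alpha\sin(\frac{L+3}{2}\omega)\sin(\frac{\omega}{2})/\sum_{i=1}^{L+1}\sin(\frac{L+2-i}{2}\omega)\sin(\frac{i\omega}{2})$, and $d_0(L)>0$. *)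

From Stdlib Require Import Reals.
Open Scope R_scope.

(* alpha_L := 1/(1+2 cos(2 pi/(L+2))) for L >= 2  (alpha_1 = +infinity is
   handled separately in [alpha_interval]). *)
Definition alphaL (L : nat) : R := 1 / (1 + 2 * cos (2 * PI / INR (L + 2))).

(* alpha in the open interval (alpha_{L+1}, alpha_L), with alpha_1 = +oo. *)
Definition alpha_interval (L : nat) (a : R) : Prop :=
  alphaL (L + 1) < a /\ ((2 <= L)%nat -> a < alphaL L).

Fixpoint sumR (n : nat) (f : nat -> R) : R :=
  match n with
  | O => 0
  | S m => sumR m f + f (S m)
  end.

(* The system AS(d_1,...,d_L) with parameter alpha on the unknown
   (l_0,...,l_{L+2}); only the values l 0, ..., l (L+2) matter. *)
Definition AS (alpha : R) (L : nat) (d : nat -> R) (l : nat -> R) : Prop :=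
  l 0%nat = 0 /\ l (L + 2)%nat = 0 /\
  (forall j : nat, (1 <= j <= L)%nat ->
     d j = - alpha * l (j - 1)%nat + l j - l (j + 1)%nat + alpha * l (j + 2)%nat) /\
  sumR (L + 1) l = 1.

Definition AS_unique (alpha : R) (L : nat) (d : nat -> R) : Prop :=
  (exists l, AS alpha L d l) /\
  (forall l l', AS alpha L d l -> AS alpha L d l' ->
     forall i, (i <= L + 2)%nat -> l i = l' i).

Definition is_d0 (alpha : R) (L : nat) (v : R) : Prop :=
  forall l, AS alpha L (fun _ => 0) l -> v = - l 1%nat + alpha * l 2%nat.

From Stdlib Require Import Reals Lra Lia.
Open Scope R_scope.

(* For [a] in [(alpha_{L+1}, alpha_L)] there is an angle [w] with
   [a sin (3w) = sin w] and [(L+2) w < pi < (L+3) w].  Then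
   [sin (xw) sin ((x+1)w)] and [sin (xw) sin ((L+2-x)w)] are homogeneous
   solutions, and a combination of [sin (xw) sin ((x+1)w)] and
   [(2x+1) sin w - sin ((2x+1)w)] gives the adjoint solution [b], whose
   values are the positive constants [c_k].  Finally [d_0(L) = -K] is the
   left flux of the solution with zero data. *)

Lemma sumR_ext n f g :
  (forall k, (1 <= k <= n)%nat -> f k = g k) -> sumR n f = sumR n g.
Proof.
  induction n as [|n IH]; intros H; simpl; auto.
  rewrite IH, H; [reflexivity | lia | intros k Hk; apply H; lia].
Qed.

Lemma sumR_zero n : sumR n (fun _ => 0) = 0.
Proof. induction n as [|n IH]; simpl; [ring | rewrite IH; ring]. Qed.

Lemma sumR_scal n K f : sumR n (fun k => K * f k) = K * sumR n f.
Proof. induction n as [|n IH]; simpl; [ring | rewrite IH; ring]. Qed.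

Lemma sumR_plus n f g : sumR n (fun k => f k + g k) = sumR n f + sumR n g.
Proof. induction n as [|n IH]; simpl; [ring | rewrite IH; ring]. Qed.

Lemma sumR_minus n f g : sumR n (fun k => f k - g k) = sumR n f - sumR n g.
Proof. induction n as [|n IH]; simpl; [ring | rewrite IH; ring]. Qed.

Lemma sumR_pos n f :
  (1 <= n)%nat -> (forall k, (1 <= k <= n)%nat -> 0 < f k) -> 0 < sumR n f.
Proof.
  induction n as [|[|n] IH]; intros Hn H; [lia | |].
  - simpl. assert (0 < f 1%nat) by (apply H; lia). lra.
  - change (0 < sumR (S n) f + f (S (S n))).
    assert (0 < sumR (S n) f) by (apply IH; [lia | intros; apply H; lia]).
    assert (0 < f (S (S n))) by (apply H; lia). lra.
Qed.

Lemma sumR_shift n f : sumR (S n) f = f 1%nat + sumR n (fun k => f (S k)).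
Proof. induction n as [|n IH]; simpl in *; [ring | rewrite IH; ring]. Qed.

Lemma sumR_rev n f : sumR n (fun k => f (n + 1 - k)%nat) = sumR n f.
Proof.
  revert f; induction n as [|n IH]; intros f; [reflexivity|].
  rewrite (sumR_shift n f). cbn [sumR].
  replace (S n + 1 - S n)%nat with 1%nat by lia.
  rewrite (sumR_ext n _ (fun k => f (S (n + 1 - k)%nat)))
    by (intros k Hk; f_equal; lia).
  rewrite (IH (fun i => f (S i))). ring.
Qed.

Definition Eop (a : R) (l : nat -> R) (k : nat) : R :=
  - a * l (k - 1)%nat + l k - l (k + 1)%nat + a * l (k + 2)%nat.

Lemma Eop_linear a p q r x y j :
  Eop a (fun i => p i + x * q i + y * r i) j = Eop a p j + x * Eop a q j + y * Eop a r j.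
Proof. unfold Eop; ring. Qed.

(* Summation by parts: the adjoint of [Eop a] is
   [b |-> a b (j-2) - b (j-1) + b j - a b (j+1)], up to boundary terms. *)
Lemma sum_by_parts (a : R) (b l : nat -> R) (n : nat) : b 0%nat = 0 ->
  sumR n (fun k => b k * Eop a l k) =
  sumR n (fun j => l j * (a * b (j - 2)%nat - b (j - 1)%nat + b j - a * b (j + 1)%nat))
  + (- a * b 1%nat * l 0%nat + a * b (n + 1)%nat * l n
     + l (n + 1)%nat * (a * b (n - 1)%nat - b n) + a * b n * l (n + 2)%nat).
Proof.
  intros Hb0. induction n as [|n IH].
  - simpl. rewrite Hb0. ring.
  - change (sumR (S n) (fun k => b k * Eop a l k)) with
      (sumR n (fun k => b k * Eop a l k) + b (S n) * Eop a l (S n)).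
    rewrite IH. cbn [sumR]. unfold Eop.
    replace (S n - 2)%nat with (n - 1)%nat by lia.
    replace (S n - 1)%nat with n by lia.
    replace (n - 0)%nat with n by lia.
    replace (S n + 1)%nat with (n + 2)%nat by lia.
    replace (S n + 2)%nat with (n + 3)%nat by lia.
    replace (n + 2 + 1)%nat with (n + 3)%nat by lia.
    replace (n + 1)%nat with (S n) by lia.
    replace (S (S n)) with (n + 2)%nat by lia. ring.
Qed.

Lemma AS_reflect a L d l :
  AS a L d l -> AS a L (fun j => - d (L + 1 - j)%nat) (fun j => l (L + 2 - j)%nat).
Proof.
  intros [Hl0 [HlN [Heq Hsum]]]. split; [|split; [|split]].
  - replace (L + 2 - 0)%nat with (L + 2)%nat by lia. exact HlN.
  - replace (L + 2 - (L + 2))%nat with 0%nat by lia. exact Hl0.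
  - intros j Hj. rewrite Heq by lia.
    replace (L + 1 - j - 1)%nat with (L + 2 - (j + 2))%nat by lia.
    replace (L + 1 - j + 1)%nat with (L + 2 - j)%nat by lia.
    replace (L + 1 - j + 2)%nat with (L + 2 - (j - 1))%nat by lia.
    replace (L + 1 - j)%nat with (L + 2 - (j + 1))%nat by lia. ring.
  - rewrite <- Hsum, <- (sumR_rev (L + 1) l).
    apply sumR_ext. intros k Hk. f_equal. lia.
Qed.

Lemma recurrence_determined a L (m z : nat -> R) : a <> 0 ->
  m 0%nat = z 0%nat -> m 1%nat = z 1%nat -> m 2%nat = z 2%nat ->
  (forall j, (1 <= j <= L)%nat -> Eop a m j = Eop a z j) ->
  forall i, (i <= L + 2)%nat -> m i = z i.
Proof.
  intros Ha H0 H1 H2 HE.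
  enough (Hn : forall n i, (i <= n)%nat -> (i <= L + 2)%nat -> m i = z i)
    by (intros i Hi; exact (Hn i i (le_n i) Hi)).
  induction n as [|n IH]; intros i Hi HiL.
  - replace i with 0%nat by lia. exact H0.
  - destruct (Nat.le_gt_cases i n) as [Hin|Hin]; [apply IH; lia|].
    replace i with (S n) in * by lia.
    destruct n as [|[|n]]; [exact H1 | exact H2|].
    specialize (HE (S n) ltac:(lia)). unfold Eop in HE.
    replace (S n + 2)%nat with (S (S (S n))) in HE by lia.
    replace (S n + 1)%nat with (S (S n)) in HE by lia.
    replace (S n - 1)%nat with n in HE by lia.
    rewrite (IH n), (IH (S n)), (IH (S (S n))) in HE by lia.
    apply (Rmult_eq_reg_l a); [lra | exact Ha].
Qed.

Fixpoint forward_solution (a : R) (d : nat -> R) (n : nat) : R :=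
  match n with
  | S (S (S m as n2) as n1) =>
      (d (S m) + a * forward_solution a d m - forward_solution a d n2
       + forward_solution a d n1) / a
  | _ => 0
  end.

Lemma forward_solution_spec a d j :
  a <> 0 -> (1 <= j)%nat -> Eop a (forward_solution a d) j = d j.
Proof.
  intros Ha Hj. destruct j as [|m]; [lia|]. unfold Eop.
  replace (S m - 1)%nat with m by lia.
  replace (S m + 1)%nat with (S (S m)) by lia.
  replace (S m + 2)%nat with (S (S (S m))) by lia.
  cbn [forward_solution]. field. exact Ha.
Qed.

Definition homogeneous (a : R) (L : nat) (h : nat -> R) : Prop :=
  forall j, (1 <= j <= L)%nat -> Eop a h j = 0.

Section BoundaryValueProblem.

Variables (a : R) (L : nat) (f u : nat -> R).
Hypothesis a_neq0 : a <> 0.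
Hypothesis f_hom : homogeneous a L f.
Hypothesis u_hom : homogeneous a L u.
Hypothesis f_0 : f 0%nat = 0.
Hypothesis u_0 : u 0%nat = 0.
Hypothesis u_end : u (L + 2)%nat = 0.
Hypothesis f_end : f (L + 2)%nat <> 0.
Hypothesis u_sum : sumR (L + 1) u <> 0.
Hypothesis fu_indep : u 1%nat * f 2%nat - u 2%nat * f 1%nat <> 0.

(* Adjust the forward solution by multiples of [f] and [u] to meet the right
   boundary condition and the normalisation. *)
Lemma AS_solvable d : exists l, AS a L d l.
Proof.
  set (p := forward_solution a d).
  set (r := - p (L + 2)%nat / f (L + 2)%nat).
  set (t := (1 - sumR (L + 1) (fun j => p j + r * f j)) / sumR (L + 1) u).
  exists (fun j => p j + r * f j + t * u j). split; [|split; [|split]].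
  - rewrite f_0, u_0. unfold p; simpl. ring.
  - rewrite u_end. unfold r. field. exact f_end.
  - intros j Hj. symmetry.
    change (Eop a (fun i => p i + r * f i + t * u i) j = d j).
    rewrite Eop_linear, f_hom, u_hom by exact Hj.
    unfold p. rewrite forward_solution_spec by (auto; lia). ring.
  - rewrite sumR_plus, sumR_scal. unfold t. field. exact u_sum.
Qed.

(* The homogeneous problem (zero data, zero sum) has only the trivial
   solution: such an [m] is a combination of [f] and [u], and the right
   boundary condition and the zero sum kill both coefficients. *)
Lemma homogeneous_trivial m :
  m 0%nat = 0 -> m (L + 2)%nat = 0 -> homogeneous a L m -> sumR (L + 1) m = 0 ->
  forall i, (i <= L + 2)%nat -> m i = 0.
Proof.
  intros m_0 m_end m_hom m_sum.
  set (det := u 1%nat * f 2%nat - u 2%nat * f 1%nat) in fu_indep.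
  set (t := (m 1%nat * f 2%nat - m 2%nat * f 1%nat) / det).
  set (r := (u 1%nat * m 2%nat - u 2%nat * m 1%nat) / det).
  assert (m_comb : forall i, (i <= L + 2)%nat -> m i = 0 + r * f i + t * u i).
  { apply (recurrence_determined a L); auto.
    - rewrite m_0, f_0, u_0. ring.
    - unfold r, t, det. field. exact fu_indep.
    - unfold r, t, det. field. exact fu_indep.
    - intros j Hj. rewrite m_hom, (Eop_linear a (fun _ => 0)), f_hom, u_hom by exact Hj.
      unfold Eop. ring. }
  assert (r0 : r = 0).
  { pose proof (m_comb (L + 2)%nat (le_n _)) as E.
    rewrite m_end, u_end in E. apply (Rmult_eq_reg_r (f (L + 2)%nat)); [lra | exact f_end]. }
  assert (t0 : t = 0).
  { rewrite (sumR_ext (L + 1) m (fun i => t * u i)) in m_sum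
      by (intros i Hi; rewrite m_comb, r0 by lia; ring).
    rewrite sumR_scal in m_sum. apply (Rmult_eq_reg_r (sumR (L + 1) u)); [lra | exact u_sum]. }
  intros i Hi. rewrite m_comb, r0, t0 by exact Hi. ring.
Qed.

(* Existence plus uniqueness: two solutions differ by a trivial solution
   of the homogeneous problem. *)
Lemma AS_unique_of_pair d : AS_unique a L d.
Proof.
  split; [apply AS_solvable|].
  intros l l' [l_0 [l_end [l_eq l_sum]]] [l'_0 [l'_end [l'_eq l'_sum]]] i Hi.
  enough (l i - l' i = 0) by lra.
  apply (homogeneous_trivial (fun j => l j - l' j)); auto.
  - rewrite l_0, l'_0. ring.
  - rewrite l_end, l'_end. ring.
  - intros j Hj. pose proof (l_eq j Hj). pose proof (l'_eq j Hj). unfold Eop in *. lra.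
  - rewrite sumR_minus, l_sum, l'_sum. ring.
Qed.

End BoundaryValueProblem.

(* Flux identities: if [b] solves the adjoint recurrence with constant
   right-hand side [K] and boundary values [b 0 = 0], [b (L+1) = 1],
   [b (L+2) = 0], then pairing the equations of [AS] with [b] expresses both
   boundary fluxes of any solution linearly in the data. *)
Section FluxIdentities.

Variables (a K : R) (L : nat) (b : nat -> R).
Hypothesis b_0 : b 0%nat = 0.
Hypothesis b_L1 : b (L + 1)%nat = 1.
Hypothesis b_L2 : b (L + 2)%nat = 0.
Hypothesis b_adj : forall j, (1 <= j <= L + 1)%nat ->
  a * b (j - 2)%nat - b (j - 1)%nat + b j - a * b (j + 1)%nat = K.

(* Summation by parts against [b]: the interior terms add up to
   [K (l 1 + ... + l L) = K (1 - l (L+1))] and the boundary terms give the flux. *)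
Lemma right_flux d l : AS a L d l ->
  - a * l L + l (L + 1)%nat = K - sumR L (fun k => b k * d k).
Proof.
  intros [l_0 [l_end [l_eq l_sum]]].
  rewrite (sumR_ext L _ (fun k => b k * Eop a l k))
    by (intros k Hk; rewrite l_eq by exact Hk; reflexivity).
  rewrite (sum_by_parts a b l L b_0).
  rewrite (sumR_ext L _ (fun j => K * l j))
    by (intros j Hj; rewrite b_adj by lia; ring).
  rewrite sumR_scal.
  pose proof (b_adj (L + 1)%nat ltac:(lia)) as b_last.
  replace (L + 1 - 2)%nat with (L - 1)%nat in b_last by lia.
  replace (L + 1 - 1)%nat with L in b_last by lia.
  replace (L + 1 + 1)%nat with (L + 2)%nat in b_last by lia.
  replace (L + 1)%nat with (S L) in l_sum |- * by lia. cbn [sumR] in l_sum.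
  rewrite <- (Nat.add_1_r L) in *. rewrite b_L1, b_L2 in *. rewrite l_0, l_end.
  replace (sumR L l) with (1 - l (L + 1)%nat) by lra.
  replace (a * b (L - 1)%nat - b L) with (K - 1) by lra. ring.
Qed.

(* The left flux follows from the right one applied to the reflected system. *)
Lemma left_flux d l : AS a L d l ->
  - l 1%nat + a * l 2%nat = - K - sumR L (fun k => b (L + 1 - k)%nat * d k).
Proof.
  intros Hl. pose proof (right_flux _ _ (AS_reflect a L d l Hl)) as F.
  cbv beta in F.
  replace (L + 2 - L)%nat with 2%nat in F by lia.
  replace (L + 2 - (L + 1))%nat with 1%nat in F by lia.
  rewrite <- (sumR_rev L (fun k => b (L + 1 - k)%nat * d k)).
  rewrite (sumR_ext L _ (fun k => (-1) * (b k * - d (L + 1 - k)%nat)))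
    by (intros k Hk; replace (L + 1 - (L + 1 - k))%nat with k by lia; ring).
  rewrite sumR_scal. lra.
Qed.

End FluxIdentities.

(* Trigonometric solutions.  Throughout, [w] is a root of the characteristic
   relation [a sin (3w) = sin w], i.e. [a (1 + 2 cos (2w)) = 1]. *)

Lemma sin_prod a b : sin a * sin b = (cos (a - b) - cos (a + b)) / 2.
Proof. rewrite cos_minus, cos_plus. field. Qed.

Lemma sin_3 w : sin (3 * w) = sin w * (1 + 2 * cos (2 * w)).
Proof.
  replace (3 * w) with (2 * w + w) by ring.
  rewrite sin_plus, sin_2a, cos_2a.
  pose proof (sin2_cos2 w) as H. unfold Rsqr in H.
  transitivity (sin w * (1 + 2 * (cos w * cos w - sin w * sin w))
                + sin w * (sin w * sin w + cos w * cos w - 1)); [ring|].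
  rewrite H. ring.
Qed.

Lemma cos_char a w p : a * sin (3 * w) = sin w ->
  a * cos (p - 3 * w) - cos (p - w) + cos (p + w) - a * cos (p + 3 * w) = 0.
Proof.
  intros H. rewrite !cos_minus, !cos_plus.
  transitivity (2 * sin p * (a * sin (3 * w) - sin w)); [ring|].
  rewrite H. ring.
Qed.

Lemma sin_char a w p : a * sin (3 * w) = sin w ->
  a * sin (p - 3 * w) - sin (p - w) + sin (p + w) - a * sin (p + 3 * w) = 0.
Proof.
  intros H. rewrite !sin_minus, !sin_plus.
  transitivity (- 2 * cos p * (a * sin (3 * w) - sin w)); [ring|].
  rewrite H. ring.
Qed.

Definition prod_sol (w x : R) : R := sin (x * w) * sin ((x + 1) * w).
Definition bridge_sol (w N x : R) : R := sin (x * w) * sin ((N - x) * w).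
Definition adj_sol (w x : R) : R := (2 * x + 1) * sin w - sin ((2 * x + 1) * w).

(* [prod_sol] solves the adjoint recurrence (the product-to-sum formula
   reduces it to [cos_char]). *)
Lemma prod_sol_adjoint a w x : a * sin (3 * w) = sin w ->
  a * prod_sol w (x - 2) - prod_sol w (x - 1) + prod_sol w x - a * prod_sol w (x + 1) = 0.
Proof.
  intros H. unfold prod_sol. rewrite !sin_prod.
  replace ((x - 2) * w - (x - 2 + 1) * w) with (- w) by ring.
  replace ((x - 1) * w - (x - 1 + 1) * w) with (- w) by ring.
  replace (x * w - (x + 1) * w) with (- w) by ring.
  replace ((x + 1) * w - (x + 1 + 1) * w) with (- w) by ring.
  replace ((x - 2) * w + (x - 2 + 1) * w) with (2 * x * w - 3 * w) by ring.
  replace ((x - 1) * w + (x - 1 + 1) * w) with (2 * x * w - w) by ring.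
  replace (x * w + (x + 1) * w) with (2 * x * w + w) by ring.
  replace ((x + 1) * w + (x + 1 + 1) * w) with (2 * x * w + 3 * w) by ring.
  pose proof (cos_char a w (2 * x * w) H). lra.
Qed.

(* [prod_sol] is self-adjoint up to a shift, hence also a forward solution. *)
Lemma prod_sol_forward a w x : a * sin (3 * w) = sin w ->
  - a * prod_sol w (x - 1) + prod_sol w x - prod_sol w (x + 1) + a * prod_sol w (x + 2) = 0.
Proof.
  intros H. pose proof (prod_sol_adjoint a w (x + 1) H) as E.
  replace (x + 1 - 2) with (x - 1) in E by ring.
  replace (x + 1 - 1) with x in E by ring.
  replace (x + 1 + 1) with (x + 2) in E by ring. lra.
Qed.

Lemma bridge_sol_forward a w N x : a * sin (3 * w) = sin w ->
  - a * bridge_sol w N (x - 1) + bridge_sol w N x - bridge_sol w N (x + 1)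
  + a * bridge_sol w N (x + 2) = 0.
Proof.
  intros H. unfold bridge_sol. rewrite !sin_prod.
  set (p := (2 * x + 1 - N) * w).
  replace ((x - 1) * w - (N - (x - 1)) * w) with (p - 3 * w) by (unfold p; ring).
  replace (x * w - (N - x) * w) with (p - w) by (unfold p; ring).
  replace ((x + 1) * w - (N - (x + 1)) * w) with (p + w) by (unfold p; ring).
  replace ((x + 2) * w - (N - (x + 2)) * w) with (p + 3 * w) by (unfold p; ring).
  replace ((x - 1) * w + (N - (x - 1)) * w) with (N * w) by ring.
  replace (x * w + (N - x) * w) with (N * w) by ring.
  replace ((x + 1) * w + (N - (x + 1)) * w) with (N * w) by ring.
  replace ((x + 2) * w + (N - (x + 2)) * w) with (N * w) by ring.
  pose proof (cos_char a w p H). lra.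
Qed.

(* The linear part of [adj_sol] produces the constant, the sine part is
   killed by [sin_char]. *)
Lemma adj_sol_adjoint a w x : a * sin (3 * w) = sin w ->
  a * adj_sol w (x - 2) - adj_sol w (x - 1) + adj_sol w x - a * adj_sol w (x + 1)
  = 2 * sin w * (1 - 3 * a).
Proof.
  intros H. unfold adj_sol.
  replace ((2 * (x - 2) + 1) * w) with (2 * x * w - 3 * w) by ring.
  replace ((2 * (x - 1) + 1) * w) with (2 * x * w - w) by ring.
  replace ((2 * x + 1) * w) with (2 * x * w + w) by ring.
  replace ((2 * (x + 1) + 1) * w) with (2 * x * w + 3 * w) by ring.
  pose proof (sin_char a w (2 * x * w) H). lra.
Qed.

(* A determinant identity giving the independence of the two homogeneous
   solutions on the indices 1, 2. *)
Lemma sin_det w N :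
  sin ((N - 1) * w) * sin (3 * w) - sin ((N - 2) * w) * sin (2 * w)
  = sin w * sin ((N + 1) * w).
Proof.
  rewrite !sin_prod.
  replace ((N - 1) * w - 3 * w) with ((N - 2) * w - 2 * w) by ring.
  replace (w - (N + 1) * w) with (- (N * w)) by ring. rewrite cos_neg.
  replace ((N - 1) * w + 3 * w) with (w + (N + 1) * w) by ring.
  replace ((N - 2) * w + 2 * w) with (N * w) by ring. field.
Qed.

(* [|sin (n w)| <= n sin w] when [sin w > 0], strictly for [n >= 2];
   this gives the positivity of [adj_sol] at the positive integers. *)
Lemma sin_mult_le w n : 0 < sin w -> Rabs (sin (INR n * w)) <= INR n * sin w.
Proof.
  intros Hs. induction n as [|n IH].
  - simpl. rewrite Rmult_0_l, sin_0, Rabs_R0. lra.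
  - rewrite S_INR. replace ((INR n + 1) * w) with (INR n * w + w) by ring.
    rewrite sin_plus.
    pose proof (Rabs_triang (sin (INR n * w) * cos w) (cos (INR n * w) * sin w)) as T.
    rewrite !Rabs_mult, (Rabs_right (sin w)) in T by lra.
    assert (Rabs (cos w) <= 1) by (apply Rabs_le; apply COS_bound).
    assert (Rabs (cos (INR n * w)) <= 1) by (apply Rabs_le; apply COS_bound).
    pose proof (Rabs_pos (sin (INR n * w))). nra.
Qed.

Lemma sin_mult_lt w n : 0 < sin w -> (2 <= n)%nat -> sin (INR n * w) < INR n * sin w.
Proof.
  intros Hs Hn. destruct n as [|n]; [lia|].
  rewrite S_INR. replace ((INR n + 1) * w) with (INR n * w + w) by ring.
  rewrite sin_plus.
  pose proof (sin_mult_le w n Hs) as IH.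
  assert (1 <= INR n) by (apply (le_INR 1); lia).
  pose proof (sin2_cos2 w) as P. unfold Rsqr in P.
  assert (Rabs (cos w) < 1) by (apply Rabs_def1; nra).
  pose proof (COS_bound (INR n * w)).
  assert (sin (INR n * w) * cos w <= Rabs (sin (INR n * w)) * Rabs (cos w))
    by (rewrite <- Rabs_mult; apply Rle_abs).
  pose proof (Rabs_pos (sin (INR n * w))). pose proof (Rabs_pos (cos w)).
  assert (Rabs (sin (INR n * w)) * Rabs (cos w) < INR n * sin w).
  { destruct (Req_dec (Rabs (sin (INR n * w))) 0) as [E|E]; [rewrite E|]; nra. }
  nra.
Qed.

(* With [cos om = (1 - a) / (2 a)] and [w = om / 2],
   the relation [a (1 + 2 cos om) = 1] is the characteristic relation, and
   [a] lies in [(alpha_{L+1}, alpha_L)] exactly when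
   [2 pi / (L+3) < om < 2 pi / (L+2)]. *)

Lemma two_pi_div_small n : 4 <= INR n -> 0 < 2 * PI / INR n <= PI / 2.
Proof.
  intros Hn. pose proof PI_RGT_0. split.
  - apply Rdiv_lt_0_compat; lra.
  - apply (Rmult_le_reg_r (INR n)); [lra|]. unfold Rdiv. field_simplify; [nra | lra].
Qed.

Lemma cos_lt_of_alphaL_lt a t : 0 <= cos t -> 1 / (1 + 2 * cos t) < a ->
  0 < a /\ (1 - a) / (2 * a) < cos t.
Proof.
  intros Hc Ha.
  assert (Hp : 1 < a * (1 + 2 * cos t)).
  { apply (Rmult_lt_compat_r (1 + 2 * cos t)) in Ha; [|lra].
    unfold Rdiv in Ha. rewrite Rmult_1_l, Rinv_l in Ha; lra. }
  assert (0 < a) by nra. split; [assumption|].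
  apply (Rmult_lt_reg_r (2 * a)); [lra|]. unfold Rdiv. field_simplify; lra.
Qed.

Lemma cos_gt_of_lt_alphaL a t : 0 <= cos t -> 0 < a -> a < 1 / (1 + 2 * cos t) ->
  cos t < (1 - a) / (2 * a).
Proof.
  intros Hc Ha0 Ha.
  assert (Hq : a * (1 + 2 * cos t) < 1).
  { apply (Rmult_lt_compat_r (1 + 2 * cos t)) in Ha; [|lra].
    unfold Rdiv in Ha. rewrite Rmult_1_l, Rinv_l in Ha; lra. }
  apply (Rmult_lt_reg_r (2 * a)); [lra|]. unfold Rdiv. field_simplify; lra.
Qed.

Lemma angle_setup (L : nat) (alpha : R) :
  (1 <= L)%nat -> alpha_interval L alpha ->
  exists w, w * INR (L + 2) < PI /\ PI < w * (INR (L + 2) + 1)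
            /\ alpha * sin (3 * w) = sin w.
Proof.
  intros HL [Hlo Hhi]. pose proof PI_RGT_0.
  set (t1 := 2 * PI / INR (L + 3)).
  assert (Ht1 : 0 < t1 <= PI / 2)
    by (apply two_pi_div_small; replace 4 with (INR 4) by (simpl; ring); apply le_INR; lia).
  unfold alphaL in Hlo. replace (L + 1 + 2)%nat with (L + 3)%nat in Hlo by lia. fold t1 in Hlo.
  assert (Hct1 : cos t1 < 1) by (rewrite <- cos_0; apply cos_decreasing_1; lra).
  destruct (cos_lt_of_alphaL_lt alpha t1 ltac:(apply cos_ge_0; lra) Hlo) as [Ha Hx1].
  set (x0 := (1 - alpha) / (2 * alpha)) in *.
  assert (Hx0 : -1/2 < x0).
  { unfold x0. apply (Rmult_lt_reg_r (2 * alpha)); [lra|].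
    unfold Rdiv. field_simplify; lra. }
  set (om := acos x0).
  pose proof (acos_bound_lt x0 ltac:(lra)) as Hom. fold om in Hom.
  assert (Hcom : cos om = x0) by (apply cos_acos; lra).
  assert (Hlow : t1 < om) by (apply (cos_decreasing_0 om t1); lra).
  assert (Hup : om < 2 * PI / INR (L + 2)).
  { destruct (Nat.le_gt_cases 2 L) as [H2|H2].
    - specialize (Hhi H2). unfold alphaL in Hhi. set (t0 := 2 * PI / INR (L + 2)) in *.
      assert (Ht0 : 0 < t0 <= PI / 2)
        by (apply two_pi_div_small; replace 4 with (INR 4) by (simpl; ring); apply le_INR; lia).
      pose proof (cos_gt_of_lt_alphaL alpha t0 ltac:(apply cos_ge_0; lra) Ha Hhi) as Hc0.
      fold x0 in Hc0. apply (cos_decreasing_0 t0 om); lra.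
    - replace L with 1%nat by lia. simpl (INR _).
      replace (2 * PI / (1 + 1 + 1)) with (2 * (PI / 3)) by field.
      apply (cos_decreasing_0 (2 * (PI / 3)) om); rewrite ?Hcom, ?cos_2PI3; lra. }
  assert (HN : 0 < INR (L + 2)) by (apply lt_0_INR; lia).
  assert (EN : INR (L + 3) = INR (L + 2) + 1) by (rewrite !plus_INR; simpl; ring).
  exists (om / 2). split; [|split].
  - apply (Rmult_lt_compat_r (INR (L + 2))) in Hup; [|lra].
    unfold Rdiv in Hup. rewrite Rmult_assoc, Rinv_l in Hup; lra.
  - unfold t1 in Hlow. rewrite EN in Hlow.
    apply (Rmult_lt_compat_r (INR (L + 2) + 1)) in Hlow; [|lra].
    unfold Rdiv in Hlow. rewrite Rmult_assoc, Rinv_l in Hlow; lra.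
  - rewrite sin_3. replace (2 * (om / 2)) with om by field. rewrite Hcom.
    unfold x0. field. lra.
Qed.

Lemma sampled_homogeneous a L (h : R -> R) :
  (forall x, - a * h (x - 1) + h x - h (x + 1) + a * h (x + 2) = 0) ->
  homogeneous a L (fun i => h (INR i)).
Proof.
  intros H j Hj. unfold Eop.
  rewrite minus_INR, !plus_INR by lia. simpl (INR 1). simpl (INR 2). apply H.
Qed.

Section Construction.

Variables (L : nat) (alpha w : R).
Hypothesis L_ge1 : (1 <= L)%nat.
Hypothesis w_below : w * INR (L + 2) < PI.
Hypothesis w_above : PI < w * (INR (L + 2) + 1).
Hypothesis w_char : alpha * sin (3 * w) = sin w.

Let N := INR (L + 2).
Let f := prod_sol w.
Let g := adj_sol w.
Let u := bridge_sol w N.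

Lemma N_ge3 : 3 <= N.
Proof. unfold N. replace 3 with (INR 3) by (simpl; ring). apply le_INR. lia. Qed.

Lemma N_pred : N - 1 = INR (L + 1).
Proof. unfold N. rewrite !plus_INR. simpl. ring. Qed.

Lemma sin_pos_below y : 0 < y <= N -> 0 < sin (y * w).
Proof. intros Hy. pose proof N_ge3. apply sin_gt_0; unfold N in *; nra. Qed.

Lemma sin_beyond_neg : sin ((N + 1) * w) < 0.
Proof. pose proof N_ge3. apply sin_lt_0; unfold N in *; nra. Qed.

Lemma sin_w_pos : 0 < sin w.
Proof. rewrite <- (Rmult_1_l w). apply sin_pos_below. pose proof N_ge3. lra. Qed.

Lemma alpha_neq0 : alpha <> 0.
Proof. intros E. rewrite E in w_char. pose proof sin_w_pos. lra. Qed.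

Lemma f_pos y : 0 < y <= N - 1 -> 0 < f y.
Proof.
  intros Hy. unfold f, prod_sol.
  pose proof (sin_pos_below y ltac:(lra)). pose proof (sin_pos_below (y + 1) ltac:(lra)). nra.
Qed.

Lemma f_N_neg : f N < 0.
Proof.
  unfold f, prod_sol. pose proof N_ge3.
  pose proof (sin_pos_below N ltac:(lra)). pose proof sin_beyond_neg. nra.
Qed.

Lemma g_pos k : (1 <= k)%nat -> 0 < g (INR k).
Proof.
  intros Hk. unfold g, adj_sol.
  replace (2 * INR k + 1) with (INR (2 * k + 1)) by (rewrite plus_INR, mult_INR; simpl; ring).
  pose proof (sin_mult_lt w (2 * k + 1) sin_w_pos ltac:(lia)). lra.
Qed.

(* [C] is the combination of [g] and [f] normalised by [C (N-1) = 1] and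
   [C N = 0]; it solves the adjoint recurrence with constant [K]. *)
Let D := f N * g (N - 1) - g N * f (N - 1).
Let C (x : R) := (f N * g x - g N * f x) / D.
Let K := f N * (2 * sin w * (1 - 3 * alpha)) / D.

Lemma D_neg : D < 0.
Proof.
  pose proof N_ge3. pose proof f_N_neg.
  pose proof (f_pos (N - 1) ltac:(lra)).
  pose proof (g_pos (L + 2) ltac:(lia)) as HgN.
  pose proof (g_pos (L + 1) ltac:(lia)) as HgN1.
  change (0 < g N) in HgN. rewrite <- N_pred in HgN1. unfold D. nra.
Qed.

Lemma C_adjoint x : alpha * C (x - 2) - C (x - 1) + C x - alpha * C (x + 1) = K.
Proof.
  pose proof D_neg. unfold C, K.
  pose proof (prod_sol_adjoint alpha w x w_char) as Hf.
  pose proof (adj_sol_adjoint alpha w x w_char) as Hg. fold f g in Hf, Hg.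
  apply (Rmult_eq_reg_r D); [|lra]. field_simplify; [|lra|lra].
  transitivity (f N * (alpha * g (x - 2) - g (x - 1) + g x - alpha * g (x + 1))
                - g N * (alpha * f (x - 2) - f (x - 1) + f x - alpha * f (x + 1))); [ring|].
  rewrite Hf, Hg. ring.
Qed.

Lemma C_vanish_left : C (-1) = 0 /\ C 0 = 0.
Proof.
  pose proof D_neg. unfold C, f, g, prod_sol, adj_sol.
  replace ((-1 + 1) * w) with 0 by ring. replace ((2 * -1 + 1) * w) with (- w) by ring.
  replace ((2 * 0 + 1) * w) with w by ring.
  rewrite Rmult_0_l, sin_0, sin_neg. split; field; lra.
Qed.

Definition coeff (k : nat) : R := C (INR k).

(* Positivity: the numerator [f N g k - g N f k] and [D] are both negative. *)
Lemma coeff_pos k : (1 <= k <= L)%nat -> 0 < coeff k.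
Proof.
  intros Hk. unfold coeff, C.
  assert (Hk1 : 1 <= INR k) by (apply (le_INR 1); lia).
  assert (HkN : INR k <= N - 1) by (rewrite N_pred; apply le_INR; lia).
  pose proof D_neg. pose proof f_N_neg.
  pose proof (g_pos (L + 2) ltac:(lia)) as HgN. change (0 < g N) in HgN.
  pose proof (g_pos k ltac:(lia)). pose proof (f_pos (INR k) ltac:(lra)).
  apply Rdiv_neg_neg; [nra | lra].
Qed.

(* The adjoint recurrence for the sampled [C]; at [j = 1] the truncated index
   [j - 2 = 0] is harmless since [C (-1) = C 0 = 0]. *)
Lemma coeff_adjoint j : (1 <= j <= L + 1)%nat ->
  alpha * coeff (j - 2)%nat - coeff (j - 1)%nat + coeff j - alpha * coeff (j + 1)%nat = K.
Proof.
  intros Hj. rewrite <- (C_adjoint (INR j)). unfold coeff.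
  replace (INR (j - 1)) with (INR j - 1) by (rewrite minus_INR by lia; reflexivity).
  replace (INR (j + 1)) with (INR j + 1) by (rewrite plus_INR; reflexivity).
  destruct (Nat.le_gt_cases 2 j) as [H2|H2].
  - rewrite minus_INR by lia. reflexivity.
  - replace j with 1%nat by lia. simpl (INR _).
    replace (1 - 2) with (-1) by ring. replace (1 - 1) with 0 by ring.
    destruct C_vanish_left as [-> ->]. reflexivity.
Qed.

Lemma coeff_fluxes d l : AS alpha L d l ->
  - alpha * l L + l (L + 1)%nat = K - sumR L (fun k => coeff k * d k) /\
  - l 1%nat + alpha * l 2%nat = - K - sumR L (fun k => coeff (L + 1 - k)%nat * d k).
Proof.
  assert (b_0 : coeff 0 = 0) by apply C_vanish_left.
  assert (b_L1 : coeff (L + 1) = 1).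
  { unfold coeff, C. rewrite <- N_pred. pose proof D_neg as HD. unfold D in *. field. lra. }
  assert (b_L2 : coeff (L + 2) = 0).
  { unfold coeff, C. fold N. pose proof D_neg as HD. field. lra. }
  intros Hl. split.
  - exact (right_flux alpha K L coeff b_0 b_L1 b_L2 coeff_adjoint d l Hl).
  - exact (left_flux alpha K L coeff b_0 b_L1 b_L2 coeff_adjoint d l Hl).
Qed.

Lemma AS_unique_all d : AS_unique alpha L d.
Proof.
  pose proof N_ge3 as HN. pose proof sin_w_pos.
  apply (AS_unique_of_pair alpha L (fun i => f (INR i)) (fun i => u (INR i)) alpha_neq0).
  - apply sampled_homogeneous. intros x. apply prod_sol_forward. exact w_char.
  - apply sampled_homogeneous. intros x. apply bridge_sol_forward. exact w_char.
  - simpl. unfold f, prod_sol. rewrite Rmult_0_l, sin_0. ring.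
  - simpl. unfold u, bridge_sol. rewrite Rmult_0_l, sin_0. ring.
  - fold N. unfold u, bridge_sol. rewrite Rminus_diag, Rmult_0_l, sin_0. ring.
  - fold N. pose proof f_N_neg. lra.
  - apply Rgt_not_eq, sumR_pos; [lia|]. intros k Hk. unfold u, bridge_sol.
    assert (1 <= INR k) by (apply (le_INR 1); lia).
    assert (INR k <= N - 1) by (rewrite N_pred; apply le_INR; lia).
    pose proof (sin_pos_below (INR k) ltac:(lra)).
    pose proof (sin_pos_below (N - INR k) ltac:(lra)). nra.
  - unfold f, u, prod_sol, bridge_sol. simpl (INR _).
    replace ((1 + 1) * w) with (2 * w) by ring. replace ((1 + 1 + 1) * w) with (3 * w) by ring.
    replace ((N - (1 + 1)) * w) with ((N - 2) * w) by ring. rewrite Rmult_1_l.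
    match goal with |- ?e <> 0 =>
      replace e with (sin w * sin (2 * w) *
        (sin ((N - 1) * w) * sin (3 * w) - sin ((N - 2) * w) * sin (2 * w))) by ring end.
    rewrite sin_det.
    pose proof (sin_pos_below 2 ltac:(lra)). pose proof sin_beyond_neg.
    assert (0 < sin w * sin (2 * w)) by nra. assert (sin w * sin ((N + 1) * w) < 0) by nra.
    apply Rmult_integral_contrapositive_currified; lra.
Qed.

(* [d_0(L) = -K], read off from the left flux of the solution with zero data;
   the two identities of the theorem are then the two flux identities. *)
Lemma flux_identities d l d0L : AS alpha L d l -> is_d0 alpha L d0L ->
  - alpha * l L + l (L + 1)%nat = - d0L - sumR L (fun k => coeff k * d k) /\
  - l 1%nat + alpha * l 2%nat = d0L - sumR L (fun k => coeff (L + 1 - k)%nat * d k).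
Proof.
  intros Hl Hd0.
  destruct (AS_unique_all (fun _ => 0)) as [[l0 Hl0] _].
  assert (d0_val : d0L = - K).
  { rewrite (Hd0 l0 Hl0). rewrite (proj2 (coeff_fluxes _ _ Hl0)).
    rewrite (sumR_ext L _ (fun _ => 0)) by (intros; ring). rewrite sumR_zero. ring. }
  rewrite d0_val, Ropp_involutive. exact (coeff_fluxes d l Hl).
Qed.

End Construction.

Theorem mainTheorem9 (L : nat) (alpha : R) :
  (1 <= L)%nat -> alpha_interval L alpha ->
  exists c : nat -> R,
    (forall k, (1 <= k <= L)%nat -> 0 < c k) /\
    forall d : nat -> R,
      AS_unique alpha L d /\
      forall l : nat -> R, AS alpha L d l ->
        forall d0L : R, is_d0 alpha L d0L ->
          (- alpha * l L + l (L + 1)%nat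
             = - d0L - sumR L (fun k => c k * d k)) /\
          (- l 1%nat + alpha * l 2%nat
             = d0L - sumR L (fun k => c (L + 1 - k)%nat * d k)).
Proof.
  intros HL Hint.
  destruct (angle_setup L alpha HL Hint) as [w [w_below [w_above w_char]]].
  exists (coeff L w). split.
  - exact (coeff_pos L w HL w_below w_above).
  - intros d. split.
    + exact (AS_unique_all L alpha w HL w_below w_above w_char d).
    + intros l Hl d0L Hd0.
      exact (flux_identities L alpha w HL w_below w_above w_char d l d0L Hl Hd0).
Qed.
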